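(* Let $\mathcal G$ be a topological $2$-group, $X$ a topological space, $\pi\colon P\to\overline X$ a principal $\mathcal G$-bundle and $\mathcal A=\{(U_i,\psi_i,\phi_i,\varepsilon_i)\}_{i\in I}$ an atlas of $\pi$. Then $c_{\mathcal A}=(\mathbf x,\mathbf e)$, defined below, is a $\mathcal G$-valued Čech cocycle subordinate to $\mathcal U=\{U_i\}_{i\in I}$.
   Context: Topological $2$-group $\mathcal G=(\mathcal G_1\rightrightarrows\mathcal G_0)$ (groupoid internal to topological groups; product $g*h$ for $t(g)=s(h)$, equal to $h1_{t(g)^{-1}}g$), $\mathcal E=\mathrm{Ker}(s)$, ${}^xe=1_xe1_{x^{-1}}$; $\overline X=(X\rightrightarrows X)$. A principal $\mathcal G$-bundle is a continuous functor $\pi\colon P\to\overline X$ from a $\mathcal G$-$2$-space (topological groupoid with strict continuous right $\mathcal G$-action) admitting an atlas: a family of trivializing charts $(U_i,\psi_i,\phi_i,\varepsilon_i)$ with $\{U_i\}$ an open cover, $\psi_i\colon P|_{U_i}\to\overline{U_i}\times\mathcal G$ a $\mathcal G$-equivariant continuous functor with $\mathcal G$-pseudo-inverse $\phi_i\colon\overline{U_i}\times\mathcal G\to P|_{U_i}$, $\varepsilon_i\colon\phi_i\psi_i\Rightarrow\mathrm{id}_{P|_{U_i}}$ a $\mathcal G_0$-equivariant continuous natural isomorphism, with $\mathrm{pr}_1\psi_i=\pi|_{U_i}$ and $\pi|_{U_i}\phi_i=\mathrm{pr}_1$. Write $U_{ij}=U_i\cap U_j$, etc. The transition functor $T_{ij}=\psi_i\phi_j\colon\overline{U_{ij}}\times\mathcal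 G\to\overline{U_{ij}}\times\mathcal G$ satisfies $T_{ij}(u,1)=(u,\mathbf x_{ij}(u))$ for a unique continuous $\mathbf x_{ij}\colon U_{ij}\to\mathcal G_0$. For $(u,x)\in U_{ijk}\times\mathcal G_0$, set $\gamma_{ijk}(u,x)=\psi_i(\varepsilon_j(\phi_k(u,x)))$; then there is a unique continuous $\mathbf e_{ijk}\colon U_{ijk}\to\mathcal G_1$ with $\gamma_{ijk}(u,x)=(u,\mathbf e_{ijk}(u)1_{\mathbf x_{ij}(u)\mathbf x_{jk}(u)x})$. A $\mathcal G$-valued Čech cocycle subordinate to $\mathcal U$ is a pair of families of continuous maps $\mathbf x_{ij}\colon U_{ij}\to\mathcal G_0$, $\mathbf e_{ijk}\colon U_{ijk}\to\mathcal E$ with $t(\mathbf e_{ijk})\mathbf x_{ij}\mathbf x_{jk}=\mathbf x_{ik}$ on $U_{ijk}$ and $\mathbf e_{ikl}\mathbf e_{ijk}=\mathbf e_{ijl}\,{}^{\mathbf x_{ij}}\mathbf e_{jkl}$ on $U_{ijkl}$. *)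

From HB Require Import structures.
From mathcomp Require Import all_boot all_order all_algebra.
From mathcomp Require Import all_classical topology.
Set Implicit Arguments. Unset Strict Implicit. Unset Printing Implicit Defensive.
Local Open Scope classical_set_scope.

Definition is_top_group (T : topologicalType) (mul : T -> T -> T) (one : T)
    (inv : T -> T) : Prop :=
  [/\ (forall x y z, mul x (mul y z) = mul (mul x y) z),
      (forall x, mul one x = x /\ mul x one = x),
      (forall x, mul (inv x) x = one /\ mul x (inv x) = one),
      continuous (fun q : T * T => mul q.1 q.2) &
      continuous inv].

(* Composition [gcomp f g] is defined when [gt f = gs g] ("f then g"). *)
Record tgpd := Tgpd {
  Ob : topologicalType;
  Mor : topologicalType;
  gs : Mor -> Ob;
  gt : Mor -> Ob;
  gid : Ob -> Mor;
  gcomp : Mor -> Mor -> Mor;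
  ginv : Mor -> Mor }.

Definition composable (C : tgpd) : set (Mor C * Mor C) :=
  [set q | gt q.1 = gs q.2].

Definition is_top_groupoid (C : tgpd) : Prop :=
  [/\ (forall p : Ob C, gs (gid p) = p /\ gt (gid p) = p),
      (forall f g : Mor C, gt f = gs g -> gs (gcomp f g) = gs f /\ gt (gcomp f g) = gt g),
      (forall f g h : Mor C, gt f = gs g -> gt g = gs h ->
         gcomp f (gcomp g h) = gcomp (gcomp f g) h),
      (forall f : Mor C, gcomp (gid (gs f)) f = f /\ gcomp f (gid (gt f)) = f) /\
      (forall f : Mor C, gs (ginv f) = gt f /\ gt (ginv f) = gs f /\
                 gcomp f (ginv f) = gid (gs f) /\ gcomp (ginv f) f = gid (gt f)) &
      [/\ continuous (@gs C), continuous (@gt C), continuous (@gid C),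
          continuous (@ginv C) &
          {within @composable C, continuous (fun q : Mor C * Mor C => gcomp q.1 q.2)}]].

Record top2group := Top2group {
  tg_gpd : tgpd;
  mul0 : Ob tg_gpd -> Ob tg_gpd -> Ob tg_gpd;
  one0 : Ob tg_gpd;
  inv0 : Ob tg_gpd -> Ob tg_gpd;
  mul1 : Mor tg_gpd -> Mor tg_gpd -> Mor tg_gpd;
  one1 : Mor tg_gpd;
  inv1 : Mor tg_gpd -> Mor tg_gpd;
  tg_groupoid : is_top_groupoid tg_gpd;
  tg_group0 : is_top_group mul0 one0 inv0;
  tg_group1 : is_top_group mul1 one1 inv1;
  tg_src_hom : forall f g, gs (mul1 f g) = mul0 (gs f) (gs g);
  tg_tgt_hom : forall f g, gt (mul1 f g) = mul0 (gt f) (gt g);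
  tg_id_hom : forall x y : Ob tg_gpd, gid (mul0 x y) = mul1 (gid x) (gid y);
  tg_inv_hom : forall f g, ginv (mul1 f g) = mul1 (ginv f) (ginv g);
  tg_comp_hom : forall f f' g g', gt f = gs g -> gt f' = gs g' ->
     gcomp (mul1 f f') (mul1 g g') = mul1 (gcomp f g) (gcomp f' g') }.

Definition G0 (G : top2group) : topologicalType := Ob (tg_gpd G).
Definition G1 (G : top2group) : topologicalType := Mor (tg_gpd G).
Definition src (G : top2group) : G1 G -> G0 G := @gs (tg_gpd G).
Definition tgt (G : top2group) : G1 G -> G0 G := @gt (tg_gpd G).
Definition idm (G : top2group) : G0 G -> G1 G := @gid (tg_gpd G).
Definition conj2 (G : top2group) (x : G0 G) (e : G1 G) : G1 G :=
  mul1 (mul1 (idm x) e) (idm (inv0 x)).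
Definition kerE (G : top2group) : set (G1 G) := [set e | src e = one0 G].

Record G2sp (G : top2group) := G2Sp {
  sp_gpd :> tgpd;
  act0 : Ob sp_gpd -> G0 G -> Ob sp_gpd;
  act1 : Mor sp_gpd -> G1 G -> Mor sp_gpd }.

Definition is_G2space (G : top2group) (P : G2sp G) : Prop :=
  [/\ is_top_groupoid P,
      continuous (fun q : Ob P * G0 G => act0 q.1 q.2),
      continuous (fun q : Mor P * G1 G => act1 q.1 q.2),
      [/\ (forall (f : Mor P) (g : G1 G), gs (act1 f g) = act0 (gs f) (src g) /\
                       gt (act1 f g) = act0 (gt f) (tgt g)),
          (forall (p : Ob P) (x : G0 G), act1 (@gid P p) (idm x) = @gid P (act0 p x)) &
          (forall (f f' : Mor P) (g g' : G1 G), gt f = gs f' -> tgt g = src g' ->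
             act1 (gcomp f f') (gcomp g g') = gcomp (act1 f g) (act1 f' g'))] &
      [/\ (forall p : Ob P, act0 p (one0 G) = p),
          (forall (p : Ob P) (x y : G0 G), act0 (act0 p x) y = act0 p (mul0 x y)),
          (forall f : Mor P, act1 f (one1 G) = f) &
          (forall (f : Mor P) (g h : G1 G), act1 (act1 f g) h = act1 f (mul1 g h))]].

(* The trivial G-2-space  \bar X x G  (objects X x G_0, morphisms X x G_1,  *)
(* only identities in the X direction, G acting by right multiplication).  *)
Definition triv_gpd (G : top2group) (X : topologicalType) : tgpd :=
  @Tgpd (X * G0 G)%type (X * G1 G)%type
    (fun m => (m.1, src m.2)) (fun m => (m.1, tgt m.2))
    (fun q => (q.1, idm q.2))
    (fun m m' => (m.1, gcomp m.2 m'.2))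
    (fun m => (m.1, ginv m.2)).

Definition triv_sp (G : top2group) (X : topologicalType) : G2sp G :=
  @G2Sp G (triv_gpd G X)
    (fun q y => (q.1, mul0 q.2 y)) (fun m g => (m.1, mul1 m.2 g)).

Definition full_mor (C : tgpd) (D : set (Ob C)) : set (Mor C) :=
  [set f | D (gs f) /\ D (gt f)].

Definition cont_functor_on (A B : tgpd) (D : set (Ob A))
    (F0 : Ob A -> Ob B) (F1 : Mor A -> Mor B) : Prop :=
  [/\ (forall f, full_mor D f -> gs (F1 f) = F0 (gs f) /\ gt (F1 f) = F0 (gt f)),
      (forall p, D p -> F1 (@gid A p) = @gid B (F0 p)),
      (forall f g, full_mor D f -> full_mor D g -> gt f = gs g ->
         F1 (gcomp f g) = gcomp (F1 f) (F1 g)),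
      {within D, continuous F0} &
      {within full_mor D, continuous F1}].

Definition equivariant_on (G : top2group) (A B : G2sp G) (D : set (Ob A))
    (F0 : Ob A -> Ob B) (F1 : Mor A -> Mor B) : Prop :=
  (forall p x, D p -> F0 (act0 p x) = act0 (F0 p) x) /\
  (forall f g, full_mor D f -> F1 (act1 f g) = act1 (F1 f) g).

(* groupoid every natural transformation is a natural isomorphism.       *)
Definition cont_equiv_nat_trans_on (G : top2group) (A B : G2sp G)
    (D : set (Ob A)) (F0 : Ob A -> Ob B) (F1 : Mor A -> Mor B)
    (F0' : Ob A -> Ob B) (F1' : Mor A -> Mor B) (eta : Ob A -> Mor B) : Prop :=
  [/\ (forall p, D p -> gs (eta p) = F0 p /\ gt (eta p) = F0' p),
      (forall f, full_mor D f -> gcomp (F1 f) (eta (gt f)) = gcomp (eta (gs f)) (F1' f)),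
      {within D, continuous eta} &
      (forall p x, D p -> eta (act0 p x) = act1 (eta p) (idm x))].

(* pi = (pi0, pi1) is a continuous functor P -> \bar X, G-invariant     *)
(* (\bar X carrying the trivial action).                               *)
Definition is_bundle_functor (G : top2group) (P : G2sp G) (X : topologicalType)
    (pi0 : Ob P -> X) (pi1 : Mor P -> X) : Prop :=
  [/\ (forall f, pi1 f = pi0 (gs f) /\ pi1 f = pi0 (gt f)),
      continuous pi0, continuous pi1 &
      (forall p x, pi0 (act0 p x) = pi0 p) /\
      (forall f g, pi1 (act1 f g) = pi1 f)].

(* p with pi0 p in V; objects of \bar V x G are the q with q.1 in V.     *)
Definition is_chart (G : top2group) (P : G2sp G) (X : topologicalType)
    (pi0 : Ob P -> X) (pi1 : Mor P -> X) (V : set X)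
    (psi0 : Ob P -> X * G0 G) (psi1 : Mor P -> X * G1 G)
    (phi0 : X * G0 G -> Ob P) (phi1 : X * G1 G -> Mor P)
    (eps : Ob P -> Mor P) : Prop :=
  let D := [set p | V (pi0 p)] in
  let DT := [set q : X * G0 G | V q.1] in
  [/\
      @cont_functor_on (sp_gpd P) (triv_gpd G X) D psi0 psi1 /\
      @equivariant_on G P (triv_sp G X) D psi0 psi1,
      (forall p, D p -> (psi0 p).1 = pi0 p) /\
      (forall f, full_mor D f -> (psi1 f).1 = pi1 f),
      @cont_functor_on (triv_gpd G X) (sp_gpd P) DT phi0 phi1 /\
      @equivariant_on G (triv_sp G X) P DT phi0 phi1,
      (forall q, DT q -> pi0 (phi0 q) = q.1) /\
      (forall m, @full_mor (triv_gpd G X) DT m -> pi1 (phi1 m) = m.1) &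
      [/\
          @cont_equiv_nat_trans_on G P P D
            (fun p => phi0 (psi0 p)) (fun f => phi1 (psi1 f))
            id id eps &
          (* phi is a G-pseudo-inverse of psi: also psi phi ~= id *)
          exists eta : X * G0 G -> X * G1 G,
            @cont_equiv_nat_trans_on G (triv_sp G X) (triv_sp G X) DT
              (fun q => psi0 (phi0 q)) (fun m => psi1 (phi1 m))
              id id eta]].

Definition is_atlas (G : top2group) (P : G2sp G) (X : topologicalType)
    (pi0 : Ob P -> X) (pi1 : Mor P -> X) (I : Type) (U : I -> set X)
    (psi0 : I -> Ob P -> X * G0 G) (psi1 : I -> Mor P -> X * G1 G)
    (phi0 : I -> X * G0 G -> Ob P) (phi1 : I -> X * G1 G -> Mor P)
    (eps : I -> Ob P -> Mor P) : Prop :=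
  [/\ (forall i, open (U i)),
      (forall u : X, exists i, U i u) &
      (forall i, is_chart pi0 pi1 (U i) (psi0 i) (psi1 i) (phi0 i) (phi1 i) (eps i))].

(* G-valued Cech cocycles subordinate to U (maps defined on all of X,   *)
(* only their restrictions to U_ij resp. U_ijk matter).                 *)
Definition cech_cocycle (G : top2group) (X : topologicalType) (I : Type)
    (U : I -> set X) (x : I -> I -> X -> G0 G) (e : I -> I -> I -> X -> G1 G) : Prop :=
  [/\ (forall i j, {within U i `&` U j, continuous x i j}),
      (forall i j k, {within U i `&` U j `&` U k, continuous e i j k}),
      (forall i j k u, (U i `&` U j `&` U k) u -> kerE (e i j k u)),
      (forall i j k u, (U i `&` U j `&` U k) u ->
         mul0 (mul0 (tgt (e i j k u)) (x i j u)) (x j k u) = x i k u) &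
      (forall i j k l u, (U i `&` U j `&` U k `&` U l) u ->
         mul1 (e i k l u) (e i j k u) = mul1 (e i j l u) (conj2 (x i j u) (e j k l u)))].

From mathcomp Require Import all_boot all_classical topology.
Set Implicit Arguments. Unset Strict Implicit.
Local Open Scope classical_set_scope.

(* The cocycle is read off from the transition functors T_ij = psi_i phi_j
   and the 2-cells gamma_ijk = psi_i eps_j phi_k.  Equivariance makes T_ij
   left multiplication by x_ij (and by 1_(x_ij) on morphisms).  Computing
   source and target of gamma_ijk through the functor psi_i gives
   s(e_ijk) = 1 and t(e_ijk) x_ij x_jk = x_ik.  The 2-cocycle identity is the
   image under psi_i of the naturality square of eps_j at the morphism
   eps_k(phi_l(u, 1)): in a 2-group g * h = h 1_(t(g)^-1) g, so both composites
   of the square become products, and cancelling 1_(x_ij x_jk x_kl) leaves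
   e_ikl e_ijk = e_ijl {}^(x_ij) e_jkl. *)

Lemma snd_continuous (S T : topologicalType) : continuous (@snd S T).
Proof. by case=> s t; exact: cvg_snd. Qed.

Lemma within_continuous_comp_on (S T W : topologicalType) (A : set S) (B : set T)
    (f : S -> T) (g : T -> W) :
  (forall s, A s -> B (f s)) -> {within A, continuous f} ->
  {within B, continuous g} -> {within A, continuous (g \o f)}.
Proof.
move=> AB cf cg; apply/subspace_continuousP => s As.
have cf_s := (subspace_continuousP A f).1 cf s As.
have cg_fs := (subspace_continuousP B g).1 cg (f s) (AB s As).
apply: cvg_comp cg_fs => Q /= /cf_s; rewrite /= !nbhs_simpl /within /=.
by apply: filterS => r Q_r Ar; exact: Q_r Ar (AB r Ar).
Qed.

Lemma continuous_within_comp (S T W : topologicalType) (A : set S)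
    (f : S -> T) (g : T -> W) :
  continuous g -> {within A, continuous f} -> {within A, continuous (g \o f)}.
Proof. by move=> cg; apply: within_continuous_comp => t _; exact: cg. Qed.

Lemma within_continuous_pair (S T W : topologicalType) (A : set S)
    (f : S -> T) (g : S -> W) :
  {within A, continuous f} -> {within A, continuous g} ->
  {within A, continuous (fun s => (f s, g s))}.
Proof.
move=> /subspace_continuousP cf /subspace_continuousP cg.
by apply/subspace_continuousP => s As; apply: cvg_pair; [exact: cf | exact: cg].
Qed.

Section TopGroup.
Variables (T : topologicalType) (mul : T -> T -> T) (one : T) (inv : T -> T).
Hypothesis hT : is_top_group mul one inv.

Lemma grp_mulgA a b c : mul a (mul b c) = mul (mul a b) c.
Proof. by case: hT. Qed.

Lemma grp_mul1g a : mul one a = a.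
Proof. by case: hT => _ /(_ a) []. Qed.

Lemma grp_mulg1 a : mul a one = a.
Proof. by case: hT => _ /(_ a) []. Qed.

Lemma grp_mulVg a : mul (inv a) a = one.
Proof. by case: hT => _ _ /(_ a) []. Qed.

Lemma grp_mulgV a : mul a (inv a) = one.
Proof. by case: hT => _ _ /(_ a) []. Qed.

Lemma grp_mulgK a b : mul (mul a b) (inv b) = a.
Proof. by rewrite -grp_mulgA grp_mulgV grp_mulg1. Qed.

Lemma grp_mulIg a b c : mul a c = mul b c -> a = b.
Proof. by move=> eq_ac_bc; rewrite -(grp_mulgK a c) eq_ac_bc grp_mulgK. Qed.

Lemma within_continuous_mul (S : topologicalType) (A : set S) (f g : S -> T) :
  {within A, continuous f} -> {within A, continuous g} ->
  {within A, continuous (fun s => mul (f s) (g s))}.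
Proof.
case: hT => _ _ _ cmul _ cf cg.
exact: continuous_within_comp cmul (within_continuous_pair cf cg).
Qed.

Lemma within_continuous_inv (S : topologicalType) (A : set S) (f : S -> T) :
  {within A, continuous f} -> {within A, continuous (fun s => inv (f s))}.
Proof. by case: hT => _ _ _ _ cinv; exact: continuous_within_comp. Qed.

End TopGroup.

Section TwoGroup.
Variable G : top2group.

Let gpdG := tg_groupoid G.
Let grp0 := tg_group0 G.
Let grp1 := tg_group1 G.

Lemma src_idm (y : G0 G) : src (idm y) = y.
Proof. by case: gpdG => /(_ y) []. Qed.

Lemma tgt_idm (y : G0 G) : tgt (idm y) = y.
Proof. by case: gpdG => /(_ y) []. Qed.

Lemma idm_continuous : continuous (@idm G).
Proof. by case: gpdG => _ _ _ _ []. Qed.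

Lemma srcM (a b : G1 G) : src (mul1 a b) = mul0 (src a) (src b).
Proof. exact: tg_src_hom. Qed.

Lemma tgtM (a b : G1 G) : tgt (mul1 a b) = mul0 (tgt a) (tgt b).
Proof. exact: tg_tgt_hom. Qed.

Lemma idmM (y z : G0 G) : idm (mul0 y z) = mul1 (idm y) (idm z).
Proof. exact: tg_id_hom. Qed.

Lemma idm_one : idm (one0 G) = one1 G.
Proof.
rewrite -[LHS](grp_mulgK grp1 _ (idm (one0 G))) -idmM (grp_mul1g grp0).
exact: grp_mulgV.
Qed.

Lemma idmK (a : G1 G) (y : G0 G) : mul1 (mul1 a (idm y)) (idm (inv0 y)) = a.
Proof.
by rewrite -(grp_mulgA grp1) -idmM (grp_mulgV grp0) idm_one (grp_mulg1 grp1).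
Qed.

(* The interchange law turns composition into multiplication. *)
Lemma gcompE (g h : G1 G) : tgt g = src h ->
  gcomp g h = mul1 (mul1 h (idm (inv0 (tgt g)))) g.
Proof.
move=> gh; have [_ _ _ [unit_law _] _] := gpdG.
set k := mul1 h (idm (inv0 (tgt g))).
have src_k : src k = one0 G by rewrite srcM src_idm -gh (grp_mulgV grp0).
have -> : h = mul1 k (idm (tgt g)).
  by rewrite /k -(grp_mulgA grp1) -idmM (grp_mulVg grp0) idm_one (grp_mulg1 grp1).
rewrite -{1}[g](grp_mul1g grp1) -idm_one tg_comp_hom; last 2 first.
- exact: etrans (tgt_idm _) (esym src_k).
- exact: esym (src_idm _).
by rewrite -src_k (proj1 (unit_law k)) (proj2 (unit_law g)).
Qed.

Lemma gcomp_mul_idm (a b : G1 G) : src b = one0 G ->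
  gcomp a (mul1 b (idm (tgt a))) = mul1 b a.
Proof.
move=> src_b; rewrite gcompE ?idmK //.
by rewrite srcM src_b src_idm (grp_mul1g grp0).
Qed.

Lemma conj2_mul_idm (y z : G0 G) (a : G1 G) :
  mul1 (conj2 y a) (idm (mul0 y z)) = mul1 (mul1 (idm y) a) (idm z).
Proof.
rewrite /conj2 -(grp_mulgA grp1) -idmM (grp_mulgA grp0) (grp_mulVg grp0).
by rewrite (grp_mul1g grp0).
Qed.

End TwoGroup.

Section Chart.
Variables (G : top2group) (P : G2sp G) (X : topologicalType).
Variables (pi0 : Ob P -> X) (pi1 : Mor P -> X) (V : set X).
Variables (psi0 : Ob P -> X * G0 G) (psi1 : Mor P -> X * G1 G).
Variables (phi0 : X * G0 G -> Ob P) (phi1 : X * G1 G -> Mor P).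
Variable eps : Ob P -> Mor P.
Hypothesis hpi : is_bundle_functor pi0 pi1.
Hypothesis hV : is_chart pi0 pi1 V psi0 psi1 phi0 phi1 eps.

Local Notation D := [set p | V (pi0 p)].

Lemma chart_full (f : Mor P) : V (pi1 f) -> full_mor D f.
Proof. by case: hpi => /(_ f) [s_f t_f] *; rewrite /full_mor /= -s_f -t_f. Qed.

Lemma psi0_fst (p : Ob P) : V (pi0 p) -> (psi0 p).1 = pi0 p.
Proof. by move=> Vp; case: hV => _ [psi_fst _] *; exact: psi_fst. Qed.

Lemma psi1_fst (f : Mor P) : V (pi1 f) -> (psi1 f).1 = pi1 f.
Proof. by move=> Vf; case: hV => _ [_ ->] //; exact: chart_full. Qed.

Lemma pi0_phi0 (q : X * G0 G) : V q.1 -> pi0 (phi0 q) = q.1.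
Proof. by move=> Vq; case: hV => _ _ _ [pi_phi0 _] _; exact: pi_phi0. Qed.

Lemma pi1_phi1 (m : X * G1 G) : V m.1 -> pi1 (phi1 m) = m.1.
Proof. by move=> Vm; case: hV => _ _ _ [_ pi_phi1] _; exact: pi_phi1. Qed.

Lemma eps_src (p : Ob P) : V (pi0 p) -> gs (eps p) = phi0 (psi0 p).
Proof. by case: hV => _ _ _ _ [[st_eps _ _ _] _] /st_eps []. Qed.

Lemma eps_tgt (p : Ob P) : V (pi0 p) -> gt (eps p) = p.
Proof. by case: hV => _ _ _ _ [[st_eps _ _ _] _] /st_eps []. Qed.

Lemma pi1_eps (p : Ob P) : V (pi0 p) -> pi1 (eps p) = pi0 p.
Proof. by move=> Vp; case: hpi => /(_ (eps p)) [_ ->] *; rewrite eps_tgt. Qed.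

Lemma eps_natural (f : Mor P) : V (pi1 f) ->
  gcomp (phi1 (psi1 f)) (eps (gt f)) = gcomp (eps (gs f)) f.
Proof.
by move=> /chart_full Df; case: hV => _ _ _ _ [[_ nat_eps _ _] _]; apply: nat_eps.
Qed.

Lemma phi0_act (u : X) (y : G0 G) : V u ->
  phi0 (u, y) = act0 (phi0 (u, one0 G)) y.
Proof.
move=> Vu; case: hV => _ _ [_ [act_phi0 _]] _ _.
by rewrite -act_phi0 //= (grp_mul1g (tg_group0 G)).
Qed.

Lemma phi1_act (u : X) (m : G1 G) : V u ->
  phi1 (u, m) = act1 (phi1 (u, one1 G)) m.
Proof.
move=> Vu; case: hV => _ _ [_ [_ act_phi1]] _ _.
by rewrite -act_phi1 //= (grp_mul1g (tg_group1 G)).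
Qed.

Lemma psi0_act (p : Ob P) (y : G0 G) : V (pi0 p) ->
  psi0 (act0 p y) = ((psi0 p).1, mul0 (psi0 p).2 y).
Proof. by move=> Vp; case: hV => [[_ [act_psi0 _]] _ _ _ _]; rewrite act_psi0. Qed.

Lemma psi1_act (f : Mor P) (g : G1 G) : V (pi1 f) ->
  psi1 (act1 f g) = ((psi1 f).1, mul1 (psi1 f).2 g).
Proof.
by move=> /chart_full Df; case: hV => [[_ [_ act_psi1]] _ _ _ _]; rewrite act_psi1.
Qed.

Lemma phi1_idm (u : X) (y : G0 G) : V u -> phi1 (u, idm y) = gid (phi0 (u, y)).
Proof.
by move=> Vu; case: hV => _ _ [[_ id_phi _ _ _] _] _ _; apply: (id_phi (u, y)).
Qed.

Lemma psi1_gid (p : Ob P) : V (pi0 p) ->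
  psi1 (gid p) = ((psi0 p).1, idm (psi0 p).2).
Proof. by move=> Vp; case: hV => [[[_ id_psi _ _ _] _] _ _ _ _]; rewrite id_psi. Qed.

Lemma psi1_src (f : Mor P) : V (pi1 f) ->
  ((psi1 f).1, src (psi1 f).2) = psi0 (gs f).
Proof.
move=> /chart_full Df.
by case: hV => [[[st_psi _ _ _ _] _] _ _ _ _]; case: (st_psi _ Df).
Qed.

Lemma psi1_tgt (f : Mor P) : V (pi1 f) ->
  ((psi1 f).1, tgt (psi1 f).2) = psi0 (gt f).
Proof.
move=> /chart_full Df.
by case: hV => [[[st_psi _ _ _ _] _] _ _ _ _]; case: (st_psi _ Df).
Qed.

Lemma phi1_tgt (m : X * G1 G) : V m.1 -> gt (phi1 m) = phi0 (m.1, tgt m.2).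
Proof. by move=> Vm; case: hV => _ _ [[st_phi _ _ _ _] _] _ _; case: (st_phi m). Qed.

Lemma psi1_gcomp (f g : Mor P) : V (pi1 f) -> V (pi1 g) -> gt f = gs g ->
  psi1 (gcomp f g) = ((psi1 f).1, gcomp (psi1 f).2 (psi1 g).2).
Proof.
move=> /chart_full Df /chart_full Dg fg.
by case: hV => [[[_ _ comp_psi _ _] _] _ _ _ _]; rewrite comp_psi.
Qed.

Lemma continuous_psi0 : {within D, continuous psi0}.
Proof. by case: hV => [[[_ _ _ ? _] _] _ _ _ _]. Qed.

Lemma continuous_psi1 : {within full_mor D, continuous psi1}.
Proof. by case: hV => [[[_ _ _ _ ?] _] _ _ _ _]. Qed.

Lemma continuous_eps : {within D, continuous eps}.
Proof. by case: hV => _ _ _ _ [[_ _ ? _] _]. Qed.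

Lemma continuous_phi0_slice (A : set X) (y : G0 G) :
  A `<=` V -> {within A, continuous (fun u => phi0 (u, y))}.
Proof.
move=> AV; case: hV => _ _ [[_ _ _ cphi0 _] _] _ _.
apply: (within_continuous_comp_on (f := fun u => (u, y)) _ _ cphi0); first exact: AV.
by apply: continuous_subspaceT => u; apply: cvg_pair; [exact: cvg_id | exact: cvg_cst].
Qed.

End Chart.

Section Atlas.
Variables (G : top2group) (X : topologicalType) (P : G2sp G).
Variables (pi0 : Ob P -> X) (pi1 : Mor P -> X) (I : Type) (U : I -> set X).
Variables (psi0 : I -> Ob P -> X * G0 G) (psi1 : I -> Mor P -> X * G1 G).
Variables (phi0 : I -> X * G0 G -> Ob P) (phi1 : I -> X * G1 G -> Mor P).
Variable eps : I -> Ob P -> Mor P.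
Hypothesis hpi : is_bundle_functor pi0 pi1.
Hypothesis hU : forall i,
  is_chart pi0 pi1 (U i) (psi0 i) (psi1 i) (phi0 i) (phi1 i) (eps i).
Variables (x : I -> I -> X -> G0 G) (e : I -> I -> I -> X -> G1 G).
Hypothesis hx : forall i j u, (U i `&` U j) u ->
  psi0 i (phi0 j (u, one0 G)) = (u, x i j u).
Hypothesis he : forall i j k u (y : G0 G), (U i `&` U j `&` U k) u ->
  psi1 i (eps j (phi0 k (u, y))) =
  (u, mul1 (e i j k u) (idm (mul0 (mul0 (x i j u) (x j k u)) y))).

Let grp0 := tg_group0 G.
Let grp1 := tg_group1 G.

Lemma psi0_phi0 i j u y : U i u -> U j u ->
  psi0 i (phi0 j (u, y)) = (u, mul0 (x i j u) y).
Proof.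
move=> Ui Uj; have Ui' : U i (pi0 (phi0 j (u, one0 G))) by rewrite (pi0_phi0 (hU j)).
by rewrite (phi0_act (hU j)) // (psi0_act (hU i)) // hx.
Qed.

Lemma psi1_phi1 i j u m : U i u -> U j u ->
  psi1 i (phi1 j (u, m)) = (u, mul1 (idm (x i j u)) m).
Proof.
move=> Ui Uj; have Ui' : U i (pi1 (phi1 j (u, one1 G))) by rewrite (pi1_phi1 (hU j)).
rewrite (phi1_act (hU j)) // (psi1_act hpi (hU i)) // -idm_one (phi1_idm (hU j)) //.
by rewrite (psi1_gid (hU i)) ?(pi0_phi0 (hU j)) // hx.
Qed.

Lemma src_e i j k u : (U i `&` U j `&` U k) u -> src (e i j k u) = one0 G.
Proof.
move=> [[Ui Uj] Uk]; set q := phi0 k (u, one0 G).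
have q_u : pi0 q = u by rewrite (pi0_phi0 (hU k)).
have Ui_eps : U i (pi1 (eps j q)) by rewrite (pi1_eps hpi (hU j)) q_u.
have := congr1 snd (psi1_src hpi (hU i) Ui_eps).
rewrite (eps_src (hU j)) ?q_u // hx // psi0_phi0 // he //=.
rewrite srcM src_idm (grp_mulg1 grp0) -[RHS](grp_mul1g grp0).
exact: (grp_mulIg grp0).
Qed.

Lemma tgt_e i j k u : (U i `&` U j `&` U k) u ->
  mul0 (mul0 (tgt (e i j k u)) (x i j u)) (x j k u) = x i k u.
Proof.
move=> [[Ui Uj] Uk]; set q := phi0 k (u, one0 G).
have q_u : pi0 q = u by rewrite (pi0_phi0 (hU k)).
have Ui_eps : U i (pi1 (eps j q)) by rewrite (pi1_eps hpi (hU j)) q_u.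
have := congr1 snd (psi1_tgt hpi (hU i) Ui_eps).
rewrite (eps_tgt (hU j)) ?q_u // hx // he //=.
by rewrite tgtM tgt_idm (grp_mulg1 grp0) (grp_mulgA grp0).
Qed.

Lemma psi1_eps_natural i j k q : U i (pi0 q) -> U j (pi0 q) -> U k (pi0 q) ->
  gcomp (psi1 i (phi1 j (psi1 j (eps k q)))).2 (psi1 i (eps j q)).2 =
  gcomp (psi1 i (eps j (phi0 k (psi0 k q)))).2 (psi1 i (eps k q)).2.
Proof.
move=> Ui Uj Uk.
have pi_kq : pi1 (eps k q) = pi0 q by rewrite (pi1_eps hpi (hU k)).
have pi_r : pi0 (phi0 k (psi0 k q)) = pi0 q.
  by rewrite (pi0_phi0 (hU k)) (psi0_fst (hU k)).
have fst_m : (psi1 j (eps k q)).1 = pi0 q by rewrite (psi1_fst hpi (hU j)) pi_kq.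
have Uj_r : U j (pi0 (phi0 k (psi0 k q))) by rewrite pi_r.
have := eps_natural hpi (hU j) (_ : U j (pi1 (eps k q))); rewrite pi_kq => /(_ Uj).
rewrite (eps_tgt (hU k)) // (eps_src (hU k)) // => /(congr1 (fun f => (psi1 i f).2)).
rewrite !(psi1_gcomp hpi (hU i)) //.
- by rewrite (pi1_eps hpi (hU j)) // pi_r.
- by rewrite pi_kq.
- by rewrite (eps_tgt (hU j)) // (eps_src (hU k)).
- by rewrite (pi1_phi1 (hU j)) fst_m.
- by rewrite (pi1_eps hpi (hU j)).
rewrite (phi1_tgt (hU j)); last by rewrite fst_m.
by rewrite (psi1_tgt hpi (hU j)) ?pi_kq // (eps_tgt (hU k)) // (eps_src (hU j)).
Qed.

Lemma e_cocycle i j k l u : (U i `&` U j `&` U k `&` U l) u ->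
  mul1 (e i k l u) (e i j k u) = mul1 (e i j l u) (conj2 (x i j u) (e j k l u)).
Proof.
move=> [[[Ui Uj] Uk] Ul]; set q := phi0 l (u, one0 G).
have q_u : pi0 q = u by rewrite (pi0_phi0 (hU l)).
have := psi1_eps_natural (i := i) (j := j) (k := k) (q := q).
rewrite q_u => /(_ Ui Uj Uk).
rewrite hx; last by split.
rewrite !he // psi1_phi1 // !(grp_mulg1 grp0) /=.
have tgt_l :
    tgt (mul1 (idm (x i j u)) (mul1 (e j k l u) (idm (mul0 (x j k u) (x k l u)))))
    = mul0 (x i j u) (x j l u).
  by rewrite !tgtM !tgt_idm -(tgt_e (i := j) (j := k) (k := l)) // !(grp_mulgA grp0).
have tgt_r : tgt (mul1 (e i j k u) (idm (mul0 (mul0 (x i j u) (x j k u)) (x k l u))))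
    = mul0 (x i k u) (x k l u).
  by rewrite tgtM tgt_idm -(tgt_e (i := i) (j := j) (k := k)) // !(grp_mulgA grp0).
rewrite -tgt_l -tgt_r !gcomp_mul_idm ?(src_e (j := j)) ?(src_e (j := k)) // => comp_eq.
apply: (grp_mulIg grp1 (c := idm (mul0 (x i j u) (mul0 (x j k u) (x k l u))))).
rewrite -(grp_mulgA grp1) (grp_mulgA grp0) -comp_eq -(grp_mulgA grp1).
by rewrite -(grp_mulgA grp0) conj2_mul_idm !(grp_mulgA grp1).
Qed.

Lemma continuous_x i j : {within U i `&` U j, continuous (x i j)}.
Proof.
have slice := continuous_phi0_slice (hU j) (y := one0 G) (@subIsetr _ (U i) _).
have cpsi :
    {within U i `&` U j, continuous (psi0 i \o fun u => phi0 j (u, one0 G))}.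
  apply: (within_continuous_comp_on _ slice (continuous_psi0 (hU i))).
  by move=> u [Ui Uj] /=; rewrite (pi0_phi0 (hU j)).
have := continuous_within_comp (@snd_continuous _ _) cpsi.
by apply: subspace_eq_continuous => u /set_mem Uij; rewrite /from_subspace /= hx.
Qed.

Lemma continuous_e i j k : {within U i `&` U j `&` U k, continuous (e i j k)}.
Proof.
set W := U i `&` U j `&` U k.
have slice :=
  continuous_phi0_slice (hU k) (y := one0 G) (@subIsetr _ (U i `&` U j) (U k)).
have ceps : {within W, continuous (eps j \o fun u => phi0 k (u, one0 G))}.
  apply: (within_continuous_comp_on _ slice (continuous_eps (hU j))).
  by move=> u [[_ Uj] Uk] /=; rewrite (pi0_phi0 (hU k)).
have cgamma :
    {within W, continuous (psi1 i \o (eps j \o fun u => phi0 k (u, one0 G)))}.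
  apply: (within_continuous_comp_on _ ceps (continuous_psi1 (hU i))).
  move=> u [[Ui Uj] Uk]; apply: (chart_full hpi) => /=.
  by rewrite (pi1_eps hpi (hU j)) (pi0_phi0 (hU k)).
have cxij := continuous_subspaceW (@subIsetl _ _ (U k)) (@continuous_x i j).
have cxjk : {within W, continuous (x j k)}.
  by apply: continuous_subspaceW (@continuous_x j k) => u [[_ Uj] Uk].
have cgamma2 := continuous_within_comp (@snd_continuous _ _) cgamma.
have cidm := continuous_within_comp (@idm_continuous G)
  (within_continuous_mul grp0 cxij cxjk).
have := within_continuous_mul grp1 cgamma2 (within_continuous_inv grp1 cidm).
apply: subspace_eq_continuous => u /set_mem Wu.
by rewrite /from_subspace /= he // (grp_mulg1 grp0) (grp_mulgK grp1).
Qed.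

End Atlas.

Theorem lemma9 (G : top2group) (X : topologicalType) (P : G2sp G)
  (pi0 : Ob P -> X) (pi1 : Mor P -> X)
  (I : Type) (U : I -> set X)
  (psi0 : I -> Ob P -> X * G0 G) (psi1 : I -> Mor P -> X * G1 G)
  (phi0 : I -> X * G0 G -> Ob P) (phi1 : I -> X * G1 G -> Mor P)
  (eps : I -> Ob P -> Mor P)
  (hP : is_G2space P)
  (hpi : is_bundle_functor pi0 pi1)
  (hA : is_atlas pi0 pi1 U psi0 psi1 phi0 phi1 eps)
  (x : I -> I -> X -> G0 G) (e : I -> I -> I -> X -> G1 G)
  (* x_ij is defined by T_ij(u, 1) = psi_i(phi_j(u, 1)) = (u, x_ij(u)) *)
  (hx : forall i j u, (U i `&` U j) u ->
          psi0 i (phi0 j (u, one0 G)) = (u, x i j u))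
  (* e_ijk is defined by gamma_ijk(u, y) = psi_i(eps_j(phi_k(u, y)))
       = (u, e_ijk(u) 1_{x_ij(u) x_jk(u) y}) *)
  (he : forall i j k u (y : G0 G), (U i `&` U j `&` U k) u ->
          psi1 i (eps j (phi0 k (u, y))) =
          (u, mul1 (e i j k u) (idm (mul0 (mul0 (x i j u) (x j k u)) y)))) :
  cech_cocycle U x e.
Proof.
case: hA => _ _ hU.
split=> [i j | i j k | i j k u Uijk | i j k u Uijk | i j k l u Uijkl].
- exact: (continuous_x hU hx (i := i) (j := j)).
- exact: (continuous_e hpi hU hx he (i := i) (j := j) (k := k)).
- exact: (src_e hpi hU hx he Uijk).
- exact: (tgt_e hpi hU hx he Uijk).
- exact: (e_cocycle hpi hU hx he Uijkl).
Qed.
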